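(* Let $I$ be a semigroup (or a monoid), let $(A,\alpha)$ and $(B,\beta)$ be semi-invertible finite $I$-sets, and let $f:A\to B$ be a bijective $I$-equivariant function. Then the inverse $f^{-1}:B\to A$ is $I$-equivariant.
   Context: For a set $X$, $\mathrm{End}_l(X)$ denotes self-maps of $X$ written on the left with product $f\circ g$ ($g$ first); $\mathrm{End}_r(X)$ denotes self-maps written on the right, $x\mapsto(x)f$, with $(x)(fg)=((x)f)g$. An $I$-set is a set $X$ with a pair $\xi=(\xi_l,\xi_r)$ of semigroup (resp. monoid) homomorphisms $\xi_l:I\to\mathrm{End}_l(X)$, $\xi_r:I\to\mathrm{End}_r(X)$ with $(\xi_l(i)(x))\xi_r(j)=\xi_l(i)((x)\xi_r(j))$ for all $i,j,x$. A function $f:X\to Y$ between $I$-sets $(X,\xi)$, $(Y,\eta)$ is $I$-equivariant if $(f(\xi_l(i)(x)))\eta_r(i)=\eta_l(i)(f((x)\xi_r(i)))$ for all $i\in I$, $x\in X$. An $I$-set $(X,\xi)$ is semi-invertible if for every $i\in I$, at least one of $\xi_l(i)$, $\xi_r(i)$ is a bijection of $X$. *)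

From mathcomp Require Import all_boot.
Set Implicit Arguments. Unset Strict Implicit. Unset Printing Implicit Defensive.

(* An I-set structure on X, for I with multiplication [mul].
   [xl i] is xi_l(i) (a map written on the left),
   [xr i x] stands for (x)xi_r(i) (a map written on the right). *)
Definition is_Iset (I X : Type) (mul : I -> I -> I)
  (xl xr : I -> X -> X) : Prop :=
  [/\
      (forall i j x, xl (mul i j) x = xl i (xl j x)),
      (forall i j x, xr (mul i j) x = xr j (xr i x)) &
      (forall i j x, xr j (xl i x) = xl i (xr j x))].

Definition semi_invertible (I X : Type) (xl xr : I -> X -> X) : Prop :=
  forall i, bijective (xl i) \/ bijective (xr i).

Definition equivariant (I X Y : Type) (xl xr : I -> X -> X)
  (yl yr : I -> Y -> Y) (f : X -> Y) : Prop :=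
  forall i x, yr i (f (xl i x)) = yl i (f (xr i x)).

From mathcomp Require Import all_boot fingroup perm.

Set Implicit Arguments.
Unset Strict Implicit.
Unset Printing Implicit Defensive.

(** Fix [i] and transport [beta_l(i)], [beta_r(i)] to [A] along [f].  Writing
  [a, r] for [alpha_l(i), alpha_r(i)] and [b, s] for the transported maps, we
  get two commuting pairs with [s a = b r], and must show [r b = a s].  If [a]
  and [b] are invertible, [s = b r a^-1] commutes with [b], so [b r a^-1 = r
  a^-1 b] and [a s = r b]; the case where [r] and [s] are invertible is the
  same square read with left and right swapped.  In the mixed case, say [a]
  and [s] invertible, finiteness gives [N > 0] with [a^N = s^N = id], and
  [s^N a^N = b^N r^N] makes [b^N] surjective, hence [b] injective, hence
  bijective. *)

Lemma bij_iter_period (T : finType) (p : T -> T) :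
  bijective p -> exists2 N, 0 < N & forall k x, iter (k * N) p x = x.
Proof.
move=> /bij_inj p_inj; exists #[perm p_inj]%g => [|k x]; first exact: order_gt0.
by rewrite -(eq_iter (permE p_inj)) -permX mulnC expgM expg_order expg1n perm1.
Qed.

Lemma iter_commute (T : Type) (f h : T -> T) :
  (forall x, f (h x) = h (f x)) -> forall n x, iter n f (h x) = h (iter n f x).
Proof. by move=> fh; elim=> //= n IHn x; rewrite IHn fh. Qed.

Section CommutingSquare.

Variables (T : Type) (a r b s : T -> T).
Hypotheses (ar : forall x, a (r x) = r (a x)) (bs : forall x, b (s x) = s (b x)).
Hypothesis sa : forall x, s (a x) = b (r x).

Lemma commuting_square_flip_bij : bijective a -> bijective b ->
  forall x, r (b x) = a (s x).
Proof.
move=> [a' aK a'K] [b' bK b'K].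
have sE x : s x = b (r (a' x)) by rewrite -sa a'K.
have b_ra' x : b (r (a' x)) = r (a' (b x)).
  by apply: (can_inj bK); rewrite -sE bs sE.
by move=> x; rewrite sE b_ra' ar a'K.
Qed.

Lemma iter_commuting_square n x :
  iter n s (iter n a x) = iter n b (iter n r x).
Proof.
elim: n x => // n IHn x.
rewrite iterSr iterS sa -(iter_commute ar) (iter_commute (fun y => esym (bs y))).
by rewrite IHn -iterSr.
Qed.

End CommutingSquare.

Lemma commuting_square_bij_cross (T : finType) (a r b s : T -> T) :
  (forall x, a (r x) = r (a x)) -> (forall x, b (s x) = s (b x)) ->
  (forall x, s (a x) = b (r x)) ->
  bijective a -> bijective s -> bijective b.
Proof.
move=> ar bs sa a_bij s_bij.
have [Na Na_gt0 a_period] := bij_iter_period a_bij.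
have [Ns Ns_gt0 s_period] := bij_iter_period s_bij.
have iterNK : cancel (iter (Na * Ns) r) (iter (Na * Ns) b).
  by move=> x; rewrite -(iter_commuting_square ar bs sa) s_period mulnC a_period.
have iterNb_bij : bijective (iter (Na * Ns) b).
  exact: (bij_can_bij (injF_bij (can_inj iterNK)) iterNK).
apply: injF_bij; apply: (@inj_compr _ _ _ (iter (Na * Ns).-1 b)) => x y.
by rewrite /= -!iterSr prednK ?muln_gt0 ?Na_gt0 ?Ns_gt0 //; apply: bij_inj.
Qed.

Lemma commuting_square_flip (T : finType) (a r b s : T -> T) :
  (forall x, a (r x) = r (a x)) -> (forall x, b (s x) = s (b x)) ->
  (forall x, s (a x) = b (r x)) ->
  bijective a \/ bijective r -> bijective b \/ bijective s ->
  forall x, r (b x) = a (s x).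
Proof.
move=> ar bs sa a_or_r b_or_s.
have ra x : r (a x) = a (r x) by rewrite ar.
have sb x : s (b x) = b (s x) by rewrite bs.
have br x : b (r x) = s (a x) by rewrite sa.
suff [[a_bij b_bij] | [r_bij s_bij]] :
    bijective a /\ bijective b \/ bijective r /\ bijective s.
- exact: commuting_square_flip_bij.
- by move=> x; rewrite (commuting_square_flip_bij ra sb br).
case: a_or_r b_or_s => [a_bij | r_bij] [b_bij | s_bij]; [left | left | right | right].
- by [].
- by split; last exact: (commuting_square_bij_cross ar bs sa).
- by split; last exact: (commuting_square_bij_cross ra sb br).
- by [].
Qed.

Theorem mainTheorem5 (I : Type) (mul : I -> I -> I) (mulA : associative mul)
  (A B : finType) (al ar : I -> A -> A) (bl br : I -> B -> B)
  (HA : is_Iset mul al ar) (HB : is_Iset mul bl br)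
  (sA : semi_invertible al ar) (sB : semi_invertible bl br)
  (f : A -> B) (g : B -> A) (fK : cancel f g) (gK : cancel g f)
  (ef : equivariant al ar bl br f) :
  equivariant bl br al ar g.
Proof.
case: HA HB => _ _ alar [_ _ blbr] i y.
have transport_bij (h : B -> B) : bijective h -> bijective (g \o h \o f).
  move=> h_bij; apply: bij_comp; last exact: Bijective fK gK.
  by apply: bij_comp h_bij; exact: Bijective gK fK.
have al_ar x : al i (ar i x) = ar i (al i x) by rewrite alar.
have bl_br x :
    (g \o bl i \o f) ((g \o br i \o f) x) = (g \o br i \o f) ((g \o bl i \o f) x).
  by rewrite /= !gK blbr.
have br_al x : (g \o br i \o f) (al i x) = (g \o bl i \o f) (ar i x) by rewrite /= ef.
have bl_or_br : bijective (g \o bl i \o f) \/ bijective (g \o br i \o f).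
  by case: (sB i) => [bl_bij | br_bij]; [left | right]; exact: transport_bij.
by have := commuting_square_flip al_ar bl_br br_al (sA i) bl_or_br (g y); rewrite /= !gK.
Qed.
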